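(* Let $\mathcal{T}$ be an MPQ-tree of an interval graph $G=(V,E)$, let $(x,y)\in E$ with $x$ over $y$ and $node(x)\neq node(y)$. If the $\langle x,y\rangle$-tree-path is rotable, then $(x,y)$ is an interval edge.
   Context: Graphs are finite and simple; for $G=(V,E)$ and $e\in E$, $G-e=(V,E\setminus\{e\})$. An edge $(x,y)\in E$ of an interval graph $G$ is an interval edge if $G-(x,y)$ is an interval graph. An MPQ-tree of an interval graph $G=(V,E)$, $V=\{1,\dots,n\}$, is a rooted plane tree whose nodes are P-nodes and Q-nodes. Each P-node carries a (possibly empty) set of vertices. A Q-node has $k\ge 3$ ordered positions $1,\dots,k$; position $i$ carries a set $S_i\subseteq V$ (the $i$-th section) and a child subtree $T_i$, which may be empty. Every vertex $v$ is assigned to exactly one node $node(v)$: either $v$ lies in the set of the P-node $node(v)$, or $node(v)$ is a Q-node and $v$ lies exactly in the sections $S_{l(v)},\dots,S_{r(v)}$ of it, with $l(v)<r(v)$. For a node with child subtrees $T_1,\dots,T_k$, $V_i$ denotes the set of vertices assigned to nodes of $T_i$ ($V_i=\emptyset$ if $T_i$ is empty). The maximal cliques of $G$ are in bijection with the descending paths from the root which at a P-node continue into one of its children (stopping if there is none) and at a Q-node choose a position $i$ and continue into $T_i$ (stopping if $T_i$ is empty); the clique is the union of the sets of the visited P-nodes and the chosen sections. Reading these cliques left to right gives a linear order of the maximal cliques, and the orders obtained this way after arbitrarily permuting children of P-nodes and reversing the positions of Q-nodes are exactly the orders of the maximal cliques of $G$ in which the cliques containing any fixed vertex are consecutive. Moreover,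 for every Q-node with sections $S_1,\dots,S_k$: (a) $V_1\neq\emptyset$ and $V_k\ne\emptyset$; (b) $S_1\subseteq S_2$ and $S_k\subseteq S_{k-1}$; (c) $S_{i-1}\cap S_i\neq\emptyset$ for $2\le i\le k$; (d) $S_{i-1}\neq S_i$ for $2\le i\le k$; (e) $(S_i\cap S_{i+1})\setminus S_1\neq\emptyset$ and $(S_{i-1}\cap S_i)\setminus S_k\neq\emptyset$ for $2\le i\le k-1$; (f) $(S_{i-1}\cup V_{i-1})\setminus S_i\neq\emptyset$ and $(S_i\cup V_i)\setminus S_{i-1}\neq\emptyset$ for $2\le i\le k$; and further (g) no empty P-node has an empty P-node as its parent, (h) no P-node has exactly one child whose root is a P-node, (i) every child subtree of a P-node is nonempty. We say $x$ is over $y$ if $node(x)$ is the lowest common ancestor of $node(x)$ and $node(y)$ in $\mathcal{T}$. For $x$ over $y$ with $node(x)\ne node(y)$, the $\langle x,y\rangle$-tree-path is the tree path $node(x)=n_1,n_2,\dots,n_t=node(y)$. For a Q-node with sections $S_1,\dots,S_k$, section $S_a$ is central if $1<a<k$, and for a vertex $v$ of that Q-node it is $v$-central if $l(v)<a<r(v)$ and $v$-non-central if $a\in\{l(v),r(v)\}$. The path goes through a central section if for some $1<i<t$, $n_i$ is a Q-node and $n_{i+1}$ lies in the subtree $T_a$ of a central section $S_a$ of $n_i$. The path starts in a central (resp. non-central) section if $n_1$ is a Q-node and $n_2$ lies in the subtree $T_a$ of an $x$-central (resp. $x$-non-central) section $S_a$ of $n_1$. It starts in a P-node if $n_1$ is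 a P-node, and ends in a P-node (resp. Q-node) if $n_t$ is a P-node (resp. Q-node). The path is almost rotable if it does not go through a central section and $n_t$ is a P-node that is a leaf of $\mathcal{T}$; it is rotable if it is almost rotable and it either starts in a P-node or starts in a non-central section. *)

From HB Require Import structures.
From mathcomp Require Import all_boot.
From Stdlib Require List Permutation.

Set Implicit Arguments.
Unset Strict Implicit.
Unset Printing Implicit Defensive.

Section Graphs.
Variable T : finType.

(* G is an interval graph: intersection graph of closed intervals
   [lo v, hi v] (integer endpoints; for finite graphs this is the same
   class as real endpoints).  The equation also forces g to be simple
   (symmetric, irreflexive). *)
Definition is_interval (g : rel T) : Prop :=
  exists lo hi : T -> nat,
    (forall v, lo v <= hi v) /\
    (forall u v, g u v = [&& u != v, lo u <= hi v & lo v <= hi u]).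

Definition del_edge (g : rel T) (x y : T) : rel T :=
  fun u v => g u v && ~~ (((u == x) && (v == y)) || ((u == y) && (v == x))).

Definition interval_edge (g : rel T) (x y : T) : Prop :=
  g x y /\ is_interval (del_edge g x y).

Definition clique (g : rel T) (K : {set T}) : bool :=
  [forall u in K, forall v in K, (u != v) ==> g u v].

Definition maxclique (g : rel T) (K : {set T}) : bool :=
  clique g K && [forall K' : {set T}, (clique g K' && (K \subset K')) ==> (K' == K)].

End Graphs.

(* A P-node carries a set and its (nonempty) child subtrees; a Q-node
   carries its positions 1..k, each with a section S_i and a possibly
   empty child subtree T_i (None = empty). *)
Inductive mpq (T : finType) : Type :=
| PNode : {set T} -> seq (mpq T) -> mpq T
| QNode : seq ({set T} * option (mpq T)) -> mpq T.
Arguments PNode {T}.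
Arguments QNode {T}.

Section MPQ.
Variable T : finType.

(* Nodes are addressed by the sequence of (0-based) child indices from the
   root (for a Q-node: the position whose child subtree is entered). *)
Fixpoint subt (t : mpq T) (a : seq nat) {struct a} : option (mpq T) :=
  match a with
  | [::] => Some t
  | i :: a' =>
    match t with
    | PNode _ cs =>
        match nth None (map Some cs) i with Some c => subt c a' | None => None end
    | QNode ps =>
        match nth (set0, None) ps i with (_, Some c) => subt c a' | _ => None end
    end
  end.

(* sections of a Q-node, 0-based: sec ps i = S_(i+1) *)
Definition sec (ps : seq ({set T} * option (mpq T))) (i : nat) : {set T} :=
  nth set0 (map fst ps) i.

Definition node_of (t : mpq T) (v : T) (a : seq nat) : bool :=
  match subt t a with
  | Some (PNode X _) => v \in X
  | Some (QNode ps) => has (fun p : {set T} * option (mpq T) => v \in p.1) ps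
  | None => false
  end.

(* v \in V_i for the node at address a (V_i : vertices assigned to nodes
   of the i-th child subtree, 0-based) *)
Definition inV (t : mpq T) (a : seq nat) (i : nat) (v : T) : Prop :=
  exists a', node_of t v (a ++ i :: a').

(* conditions (a)-(f) for a Q-node at address a, in 0-based indexing *)
Definition qnode_ok (t : mpq T) (a : seq nat) (ps : seq ({set T} * option (mpq T))) : Prop :=
  let k := size ps in
  let S := sec ps in
  let V := inV t a in
  3 <= k /\
  ((exists v, V 0 v) /\ (exists v, V k.-1 v)) /\
  (S 0 \subset S 1 /\ S k.-1 \subset S k.-2) /\
  (forall i, 0 < i < k -> S i.-1 :&: S i != set0) /\
  (forall i, 0 < i < k -> S i.-1 != S i) /\
  (forall i, 0 < i < k.-1 ->
     ((S i :&: S i.+1) :\: S 0 != set0) /\ ((S i.-1 :&: S i) :\: S k.-1 != set0)) /\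
  (forall i, 0 < i < k ->
     (exists v, (v \in S i.-1 \/ V i.-1 v) /\ v \notin S i) /\
     (exists v, (v \in S i \/ V i v) /\ v \notin S i.-1)).

(* conditions (g),(h) for a P-node at address a; (i) holds by construction *)
Definition pnode_ok (t : mpq T) (a : seq nat) (S : {set T}) (cs : seq (mpq T)) : Prop :=
  (S = set0 -> forall j S' cs', subt t (a ++ [:: j]) = Some (PNode S' cs') -> S' != set0) /\
  ~ (exists S' cs', cs = [:: PNode S' cs']).

Fixpoint cliques (t : mpq T) : seq {set T} :=
  match t with
  | PNode X cs =>
      match cs with
      | [::] => [:: X]
      | _ => flatten (map (fun c => map (setU X) (cliques c)) cs)
      end
  | QNode ps =>
      flatten (map (fun p => match p with
                             | (X, None) => [:: X]
                             | (X, Some c) => map (setU X) (cliques c)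
                             end) ps)
  end.

Inductive tequiv : mpq T -> mpq T -> Prop :=
| teP S cs cs' cs'' :
    List.Forall2 tequiv cs cs' -> Permutation.Permutation cs' cs'' ->
    tequiv (PNode S cs) (PNode S cs'')
| teQ ps ps' : List.Forall2 pequiv ps ps' -> tequiv (QNode ps) (QNode ps')
| teQrev ps ps' : List.Forall2 pequiv ps ps' -> tequiv (QNode ps) (QNode (rev ps'))
with pequiv : ({set T} * option (mpq T)) -> ({set T} * option (mpq T)) -> Prop :=
| peNone S : pequiv (S, None) (S, None)
| peSome S c c' : tequiv c c' -> pequiv (S, Some c) (S, Some c').

Definition consecutive (s : seq {set T}) : Prop :=
  forall v i j k, i <= j <= k -> k < size s ->
    v \in nth set0 s i -> v \in nth set0 s k -> v \in nth set0 s j.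

Definition is_mpq_tree (g : rel T) (t : mpq T) : Prop :=
  (* bijection paths <-> maximal cliques, giving a linear order *)
  (uniq (cliques t) /\ (forall K, (K \in cliques t) = maxclique g K)) /\
  (* the obtainable orders are exactly the consecutive orders *)
  (forall s : seq {set T},
     (exists t', tequiv t t' /\ cliques t' = s) <->
     [/\ uniq s, (forall K, (K \in s) = maxclique g K) & consecutive s]) /\
  (forall v, exists! a, node_of t v a) /\
  (forall v a ps, node_of t v a -> subt t a = Some (QNode ps) ->
     exists l r, l < r < size ps /\
       forall i, i < size ps -> (v \in sec ps i) = (l <= i <= r)) /\
  (forall a, match subt t a with
             | Some (QNode ps) => qnode_ok t a ps
             | Some (PNode X cs) => pnode_ok t a X cs
             | None => True
             end).

(* l(v), r(v) (0-based) in a Q-node with positions ps *)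
Definition lsec (ps : seq ({set T} * option (mpq T))) (v : T) : nat :=
  find (fun p : {set T} * option (mpq T) => v \in p.1) ps.
Definition rsec (ps : seq ({set T} * option (mpq T))) (v : T) : nat :=
  (size ps).-1 - find (fun p : {set T} * option (mpq T) => v \in p.1) (rev ps).

(* x over y: node(x) is the lowest common ancestor of node(x), node(y),
   i.e. the address ax of node(x) is a prefix of the address ay of node(y).
   The <x,y>-tree-path consists of the nodes at addresses take m ay,
   size ax <= m <= size ay. *)
Definition is_over (ax ay : seq nat) : bool := prefix ax ay.

(* goes through a central section: an inner node n_i (1<i<t) is a Q-node
   and n_(i+1) lies in the subtree of a central section of it *)
Definition through_central (t : mpq T) (ax ay : seq nat) : Prop :=
  exists m ps, size ax < m < size ay /\
    subt t (take m ay) = Some (QNode ps) /\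
    0 < nth 0 ay m < (size ps).-1.

Definition starts_in_P (t : mpq T) (ax : seq nat) : Prop :=
  exists S cs, subt t ax = Some (PNode S cs).

Definition starts_central (t : mpq T) (x : T) (ax ay : seq nat) : Prop :=
  exists ps, subt t ax = Some (QNode ps) /\
    lsec ps x < nth 0 ay (size ax) < rsec ps x.

Definition starts_noncentral (t : mpq T) (x : T) (ax ay : seq nat) : Prop :=
  exists ps, subt t ax = Some (QNode ps) /\
    (nth 0 ay (size ax) = lsec ps x \/ nth 0 ay (size ax) = rsec ps x).

Definition ends_in_P_leaf (t : mpq T) (ay : seq nat) : Prop :=
  exists S, subt t ay = Some (PNode S [::]).

Definition almost_rotable (t : mpq T) (ax ay : seq nat) : Prop :=
  ~ through_central t ax ay /\ ends_in_P_leaf t ay.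

Definition rotable (t : mpq T) (x : T) (ax ay : seq nat) : Prop :=
  almost_rotable t ax ay /\ (starts_in_P t ax \/ starts_noncentral t x ax ay).

End MPQ.

From HB Require Import structures.
From mathcomp Require Import all_boot.
From mathcomp Require Import zify.
From Stdlib Require List Permutation.

Set Implicit Arguments.
Unset Strict Implicit.
Unset Printing Implicit Defensive.

(* Since node(y) is a leaf P-node, y lies in exactly one clique K of
   every clique order read off the tree.  We rotate the tree along the path
   from the root to node(y) -- at P-nodes the child on the path becomes the
   first child, Q-nodes are reversed when needed -- so that the resulting
   consecutive order of the maximal cliques is A ++ K :: R with no clique of
   A containing x.  This is where rotability enters: below node(x) the path
   avoids central sections, so it can be made to enter first positions, and
   at node(x) it enters an extreme section of x.  In the interval model
   [lo v, hi v] given by the positions of the cliques containing v, y is then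
   the single point lo x, and deleting xy just moves the left end of x past it. *)

Definition free_of (T : finType) (v : T) (l : seq {set T}) : Prop :=
  forall K, K \in l -> v \notin K.

Definition layout (T : finType) (x y : T) (b : bool) (l : seq {set T}) : Prop :=
  exists A K R, [/\ l = A ++ K :: R, y \in K, free_of y (A ++ R), free_of x A
                  & (b -> A = [::])].

Section IntervalModel.
Variables (T : finType) (g : rel T).
Hypothesis g_interval : is_interval g.

Lemma interval_irrefl u : g u u = false.
Proof. by case: g_interval => lo [hi [_ ->]]; rewrite eqxx. Qed.

Lemma interval_sym u v : g u v = g v u.
Proof.
case: g_interval => lo [hi [_ H]]; rewrite !H eq_sym.
by case: (v != u) => //=; rewrite andbC.
Qed.

(* every clique extends to a maximal one: take a largest clique above it *)
Lemma maxclique_sup (Q : {set T}) : clique g Q -> exists2 M, maxclique g M & Q \subset M.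
Proof.
move=> cQ; have P0 : clique g Q && (Q \subset Q) by rewrite cQ subxx.
case: (@arg_maxnP _ Q (fun M : {set T} => clique g M && (Q \subset M))
  (fun M : {set T} => #|M|) P0) => M /andP [cM sQM] Mmax.
exists M => //; rewrite /maxclique cM /=.
apply/forallP => K; apply/implyP => /andP [cK sMK].
by rewrite eq_sym eqEcard sMK; apply: Mmax; rewrite cK (subset_trans sQM sMK).
Qed.

Lemma clique1 u : clique g [set u].
Proof.
by apply/forallP => a; apply/implyP; rewrite inE => /eqP ->; apply/forallP => b;
  apply/implyP; rewrite inE => /eqP ->; rewrite eqxx.
Qed.

Lemma clique2 u v : g u v -> clique g [set u; v].
Proof.
move=> guv; apply/forallP => a; apply/implyP => Ha; apply/forallP => b.
apply/implyP => Hb; apply/implyP.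
by move: Ha Hb; rewrite !inE => /orP [] /eqP -> /orP [] /eqP ->;
  rewrite ?eqxx // interval_sym.
Qed.

(* From now on s lists the maximal cliques in a consecutive order; v is
   represented by the interval [lo v, hi v] of positions of its cliques. *)
Variable s : seq {set T}.
Hypothesis s_max : forall K, (K \in s) = maxclique g K.
Hypothesis s_consec : consecutive s.

Definition lo (v : T) : nat := find (fun K : {set T} => v \in K) s.
Definition hi (v : T) : nat :=
  (size s).-1 - find (fun K : {set T} => v \in K) (rev s).

(* every vertex lies in a maximal clique, so lo and hi are positions of s *)
Lemma has_clique v : has (fun K : {set T} => v \in K) s.
Proof.
case: (maxclique_sup (clique1 v)) => M mM sM.
by apply/hasP; exists M; rewrite ?s_max // (subsetP sM) ?inE.
Qed.

Lemma lo_in v : v \in nth set0 s (lo v).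
Proof. exact: (nth_find set0 (has_clique v)). Qed.

Lemma lo_lt v : lo v < size s.
Proof. by rewrite /lo -has_find has_clique. Qed.

Lemma hi_in v : v \in nth set0 s (hi v).
Proof.
have h : has (fun K : {set T} => v \in K) (rev s) by rewrite has_rev has_clique.
have := nth_find set0 h; rewrite nth_rev; last by rewrite -size_rev -has_find.
move: h; rewrite has_find size_rev /hi => h.
by have -> : (size s).-1 - find (fun K : {set T} => v \in K) (rev s)
  = size s - (find (fun K : {set T} => v \in K) (rev s)).+1 by lia.
Qed.

Lemma hi_lt v : hi v < size s.
Proof. by have := lo_lt v; rewrite /hi; lia. Qed.

Lemma lo_le j v : v \in nth set0 s j -> lo v <= j.
Proof.
move=> h; rewrite leqNgt; apply/negP => lt.
by have := before_find set0 lt; rewrite h.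
Qed.

Lemma le_hi j v : j < size s -> v \in nth set0 s j -> j <= hi v.
Proof.
move=> js h; rewrite leqNgt; apply/negP => lt.
have lt2 : size s - j.+1 < find (fun K : {set T} => v \in K) (rev s)
  by move: lt; rewrite /hi; lia.
have := before_find set0 lt2; rewrite nth_rev; last by lia.
have -> : size s - (size s - j.+1).+1 = j by lia.
by rewrite h.
Qed.

(* consecutiveness: v lies exactly in the cliques between lo v and hi v *)
Lemma in_nth_clique j v : (v \in nth set0 s j) = (lo v <= j <= hi v) && (j < size s).
Proof.
apply/idP/idP => [h|/andP [/andP [a b] js]].
  have js : j < size s.
    by rewrite ltnNge; apply/negP => sj; move: h; rewrite nth_default // inE.
  by rewrite js lo_le // le_hi.
by apply: (s_consec (i := lo v) (k := hi v)); rewrite ?a ?b ?hi_lt ?lo_in ?hi_in.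
Qed.

Lemma lo_le_hi v : lo v <= hi v.
Proof. by have := lo_in v; rewrite in_nth_clique => /andP [/andP [a b] _]; lia. Qed.

(* two vertices are adjacent iff they share a clique, i.e. their intervals meet *)
Lemma clique_order_model u v : g u v = [&& u != v, lo u <= hi v & lo v <= hi u].
Proof.
apply/idP/idP => [guv|/and3P [nuv h1 h2]].
  have nuv : u != v by apply: contraTneq guv => ->; rewrite interval_irrefl.
  case: (maxclique_sup (clique2 guv)) => M mM sM.
  have Ms : M \in s by rewrite s_max.
  have js : index M s < size s by rewrite index_mem.
  have uM : u \in nth set0 s (index M s) by rewrite nth_index // (subsetP sM) // !inE eqxx.
  have vM : v \in nth set0 s (index M s)
    by rewrite nth_index // (subsetP sM) // !inE eqxx orbT.
  move: uM vM; rewrite !in_nth_clique js nuv !andbT /= => /andP [a b] /andP [c d].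
  by apply/andP; split; lia.
have adj a b : a != b -> lo a <= lo b -> lo b <= hi a -> g a b.
  move=> nab l1 l2.
  have aj : a \in nth set0 s (lo b) by rewrite in_nth_clique l1 l2 lo_lt.
  have : maxclique g (nth set0 s (lo b)) by rewrite -s_max mem_nth ?lo_lt.
  case/andP => /forallP /(_ a) /implyP /(_ aj) /forallP /(_ b) /implyP /(_ (lo_in b)).
  by move/implyP => /(_ nab).
case: (leqP (lo u) (lo v)) => l; first exact: adj.
by rewrite interval_sym; apply: adj; rewrite 1?eq_sym // ltnW.
Qed.

Lemma point_interval y A K R :
  s = A ++ K :: R -> y \in K -> free_of y (A ++ R) -> lo y = size A /\ hi y = size A.
Proof.
move=> es yK yAR.
have yA : y \in nth set0 s (size A) by rewrite es nth_cat ltnn subnn.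
have notin j : j < size s -> j != size A -> y \notin nth set0 s j.
  move=> js nj; apply: yAR; rewrite es nth_cat mem_cat.
  case: ltnP => [jA|Aj]; first by rewrite mem_nth.
  rewrite es size_cat /= in js.
  case E: (j - size A) => [|k] /=.
    by move: nj; rewrite eqn_leq -subn_eq0 E Aj.
  by apply/orP; right; apply: mem_nth; move: js; rewrite addnS ltnS -leq_subLR E.
split; apply/eqP; rewrite eqn_leq.
  rewrite lo_le //= leqNgt; apply/negP => h.
  by have := notin _ (lo_lt y) (negbT (ltn_eqF h)); rewrite lo_in.
rewrite le_hi ?andbT //; last by rewrite es size_cat /= addnS ltnS leq_addr.
rewrite leqNgt; apply/negP => h.
by have := notin _ (hi_lt y) (negbT (gtn_eqF h)); rewrite hi_in.
Qed.

End IntervalModel.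

(* Deleting the edge xy from an interval model in which the interval of y is
   the left endpoint of that of x: shrink y to a point, cut x just right of it. *)
Lemma del_edge_interval (T : finType) (g : rel T) (lo hi : T -> nat) (x y : T) :
  (forall v, lo v <= hi v) ->
  (forall u v, g u v = [&& u != v, lo u <= hi v & lo v <= hi u]) ->
  x != y -> lo y = lo x -> hi y = lo x ->
  is_interval (del_edge g x y).
Proof.
move=> lohi model nxy ey1 ey2.
exists (fun v => 3 * lo v + (v == x)), (fun v => if v == y then 3 * lo v else 3 * hi v + 2).
split=> [v|u v].
  case: (eqVneq v y) => [->|nvy]; first by rewrite /= eq_sym (negbTE nxy) addn0.
  by case: (v == x); have := lohi v; lia.
rewrite /del_edge model.
have hx := lohi x; have hy := lohi y; have hu := lohi u; have hv := lohi v.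
have ex : (x == y) = false by apply/negbTE.
have ey : (y == x) = false by rewrite eq_sym.
case: (eqVneq u x) => [e1|n1]; case: (eqVneq u y) => [e2|n2];
case: (eqVneq v x) => [e3|n3]; case: (eqVneq v y) => [e4|n4]; subst => /=;
  rewrite ?eqxx ?ex ?ey /= ?andbT ?andbF //=; try by rewrite eqxx in nxy.
all: try (apply/esym/negbTE; apply/negP => /andP [] ? ?; lia).
all: case: (_ != _) => //=; apply/idP/idP => /andP [] ? ?; apply/andP; split; lia.
Qed.

Lemma interval_edge_of_layout (T : finType) (g : rel T) (s : seq {set T}) (x y : T) b :
  is_interval g -> (forall K, (K \in s) = maxclique g K) -> consecutive s ->
  g x y -> layout x y b s -> interval_edge g x y.
Proof.
move=> g_int s_max s_consec gxy [A [K [R [es yK yAR xA _]]]].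
have model := clique_order_model g_int s_max s_consec.
have nxy : x != y by apply: contraTneq gxy => ->; rewrite interval_irrefl.
have [loy hiy] := point_interval s_max es yK yAR.
have lox : lo s x = size A.
  apply/eqP; rewrite eqn_leq.
  have := model x y; rewrite gxy hiy => /esym /and3P [_ -> _] /=.
  rewrite leqNgt; apply/negP => h.
  have := lo_in s_max x; rewrite {1}es nth_cat h => xin.
  by have := xA _ (mem_nth set0 h); rewrite xin.
split=> //; apply: (del_edge_interval (lo := lo s) (hi := hi s)) => //.
- exact: lo_le_hi.
- by rewrite loy lox.
- by rewrite hiy lox.
Qed.

Section Layouts.
Variable T : finType.

Lemma free_of_cat (v : T) l1 l2 :
  free_of v (l1 ++ l2) <-> free_of v l1 /\ free_of v l2.
Proof.
split=> [H|[H1 H2] K]; last by rewrite mem_cat => /orP [/H1|/H2].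
by split=> K h; apply: H; rewrite mem_cat h ?orbT.
Qed.

Lemma free_of_map (v : T) (X : {set T}) l :
  v \notin X -> free_of v l -> free_of v (map (setU X) l).
Proof. by move=> vX H _ /mapP [K Kin ->]; rewrite inE negb_or vX H. Qed.

Lemma free_of_flatten (A : Type) (a0 : A) (f : A -> seq {set T}) v l :
  (forall j, j < size l -> free_of v (f (nth a0 l j))) -> free_of v (flatten (map f l)).
Proof.
elim: l => [|a l IH] H K //=; rewrite mem_cat => /orP [].
  exact: (H 0).
by apply: IH => j lt; exact: (H j.+1).
Qed.

Variables x y : T.

Lemma layout_weaken (b b' : bool) l : (b' -> b) -> layout x y b l -> layout x y b' l.
Proof. by move=> bb [A [K [R [-> yK yAR xA nA]]]]; exists A, K, R; split=> // /bb. Qed.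

Lemma layout_map (X : {set T}) (b : bool) l :
  y \notin X -> b || (x \notin X) -> layout x y b l -> layout x y b (map (setU X) l).
Proof.
move=> yX bxX [A [K [R [-> yK yAR xA nA]]]].
exists (map (setU X) A), (X :|: K), (map (setU X) R); split.
- by rewrite map_cat.
- by rewrite inE yK orbT.
- by rewrite -map_cat; apply: free_of_map.
- by case: b bxX nA => [_ -> // | /= xX _]; apply: free_of_map.
- by move=> /nA ->.
Qed.

Lemma layout_app (b : bool) pre l post :
  free_of x pre -> free_of y pre -> free_of y post -> layout x y b l ->
  layout x y (b && nilp pre) (pre ++ l ++ post).
Proof.
move=> xpre ypre ypost [A [K [R [-> yK yAR xA nA]]]].
exists (pre ++ A), K, (R ++ post); split=> //.
- by rewrite -!catA.
- move: yAR => /free_of_cat [yA yR].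
  by apply/free_of_cat; split; apply/free_of_cat.
- exact/free_of_cat.
- by case/andP => /nA -> /nilP ->.
Qed.

End Layouts.

Section TreeFacts.
Variable T : finType.
Notation pos := ({set T} * option (mpq T))%type.

Definition opt_pred (P : mpq T -> Prop) (o : option (mpq T)) : Prop :=
  if o is Some c then P c else True.

Definition mpq_ind' (P : mpq T -> Prop)
  (HP : forall X cs, List.Forall P cs -> P (PNode X cs))
  (HQ : forall ps : seq pos, List.Forall (fun p => opt_pred P p.2) ps -> P (QNode ps)) :
  forall u, P u :=
  fix F u := match u return P u with
  | PNode X cs => HP X cs ((fix G l := match l return List.Forall P l with
       | [::] => List.Forall_nil _
       | c :: l' => List.Forall_cons c (F c) (G l') end) cs)
  | QNode ps => HQ ps ((fix G (l : seq pos) :=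
       match l return List.Forall (fun p => opt_pred P p.2) l with
       | [::] => List.Forall_nil _
       | p :: l' => List.Forall_cons p
           (match p return opt_pred P p.2 with
            | (_, Some c) => F c
            | (_, None) => I end) (G l') end) ps)
  end.

Lemma tequiv_refl (u : mpq T) : tequiv u u.
Proof.
elim/mpq_ind': u => [X cs IH|ps IH].
  apply: (@teP _ X cs cs cs); last exact: Permutation.Permutation_refl.
  by elim: IH => [|c l Hc _ IHl]; constructor.
apply: teQ; elim: IH => [|[S [c|]] l Hc _ IHl]; do !constructor => //.
Qed.

Lemma Forall2_tequiv_refl (l : seq (mpq T)) : List.Forall2 (@tequiv T) l l.
Proof. by elim: l => [|c l IH]; constructor => //; exact: tequiv_refl. Qed.

Lemma Forall2_pequiv_refl (l : seq pos) : List.Forall2 (@pequiv T) l l.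
Proof.
elim: l => [|[S [c|]] l IH]; constructor => //; constructor; exact: tequiv_refl.
Qed.

Lemma subt_cat (u : mpq T) a b :
  subt u (a ++ b) = if subt u a is Some w then subt w b else None.
Proof.
elim: a u => [|i a IH] u //=; case: u => [X cs|ps].
  by case: (nth None (map Some cs) i).
by case: (nth (set0, None) ps i) => S [c|].
Qed.

Definition pos_cliques (p : pos) : seq {set T} :=
  match p with (X, None) => [:: X] | (X, Some c) => map (setU X) (cliques c) end.

Lemma cliques_QNode (ps : seq pos) : cliques (QNode ps) = flatten (map pos_cliques ps).
Proof. by []. Qed.

Lemma subt_PNode_child (u : mpq T) a X cs j :
  subt u a = Some (PNode X cs) -> j < size cs ->
  subt u (a ++ [:: j]) = Some (nth (PNode set0 [::]) cs j).
Proof. by move=> ha lt; rewrite subt_cat ha /= (nth_map (PNode set0 [::])). Qed.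

Lemma notin_before_lsec (ps : seq pos) v j : j < lsec ps v -> v \notin (nth (set0, None) ps j).1.
Proof. by move=> h; rewrite (before_find _ h). Qed.

Lemma notin_after_rsec (ps : seq pos) v j :
  rsec ps v < j -> j < size ps -> v \notin (nth (set0, None) ps j).1.
Proof.
rewrite /rsec => h lt.
have lt2 : size ps - j.+1 < find (fun p : pos => v \in p.1) (rev ps) by lia.
have := before_find (set0, None) lt2; rewrite nth_rev; last by lia.
have -> : size ps - (size ps - j.+1).+1 = j by lia.
by move=> ->.
Qed.

Lemma nth_Some (A : Type) (a0 : A) (l : seq A) i c :
  nth None (map Some l) i = Some c -> i < size l /\ nth a0 l i = c.
Proof. by elim: l i => [|b l IH] [|i] //=; [case | exact: IH]. Qed.

Lemma in_flatten_map (A : Type) (f : A -> seq {set T}) (l : seq A) K :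
  K \in flatten (map f l) -> exists j a, nth None (map Some l) j = Some a /\ K \in f a.
Proof.
elim: l => [|a l IH] //=; rewrite mem_cat => /orP [h|/IH [j [b [e h]]]].
  by exists 0, a.
by exists j.+1, b.
Qed.

Lemma Forall_nth_Some (A : Type) (P : A -> Prop) l j a :
  List.Forall P l -> nth None (map Some l) j = Some a -> P a.
Proof.
by move=> H; elim: H j => [|b l' Pb _ IH] [|j] //=; [case=> <- | exact: IH].
Qed.

Lemma clique_node (u : mpq T) K v :
  K \in cliques u -> v \in K -> exists b, node_of u v b.
Proof.
elim/mpq_ind': u K => [X [|c0 cs0] IH|ps IH] K.
- by rewrite /= inE => /eqP -> vX; exists [::].
- move=> /in_flatten_map [j [c [e /mapP [K' K'in ->]]]].
  rewrite inE => /orP [vX|vK]; first by exists [::].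
  have [b hb] := Forall_nth_Some IH e K' K'in vK.
  by exists (j :: b); rewrite /node_of /= e.
move=> /in_flatten_map [j [[S o] [e Kin]]] vK.
have [jlt nj] := nth_Some (set0, None) e.
have in_sec : v \in S -> exists b, node_of (QNode ps) v b.
  by move=> vS; exists [::]; apply/(has_nthP (set0, None)); exists j; rewrite ?nj.
case: o e Kin nj => [c|] e Kin nj; last first.
  by move: Kin; rewrite inE => /eqP eK; apply: in_sec; rewrite -eK.
move: Kin => /mapP [K' K'in eK]; move: vK; rewrite eK inE => /orP [/in_sec //|vK].
have [b hb] := Forall_nth_Some IH e K' K'in vK.
by exists (j :: b); rewrite /node_of /= nj.
Qed.

End TreeFacts.

Section Rotation.
Variable T : finType.
Notation pos := ({set T} * option (mpq T))%type.
Variable x : T.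
Variable n0 : nat.

(* Orientation of the Q-node met at depth d on the path when entering
   position i: above node(x) (d < n0) keep it; at node(x) (d = n0) make the
   entered position the leftmost section of x; below node(x) make it the
   first position. *)
Definition revd (d : nat) (ps : seq pos) (i : nat) : bool :=
  if d < n0 then false else if d == n0 then i != lsec ps x else i != 0.

Fixpoint rotm (d : nat) (u : mpq T) (p : seq nat) {struct p} : mpq T :=
  match p with
  | [::] => u
  | i :: p' =>
    match u with
    | PNode X cs =>
      match nth None (map Some cs) i with
      | Some c => PNode X (rotm d.+1 c p' :: take i cs ++ drop i.+1 cs)
      | None => u
      end
    | QNode ps =>
      match nth (set0, None) ps i with
      | (S0, Some c) =>
        let ps' := take i ps ++ (S0, Some (rotm d.+1 c p')) :: drop i.+1 ps in
        QNode (if revd d ps i then rev ps' else ps')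
      | _ => u
      end
    end
  end.

Lemma split_nth (A : Type) (a0 : A) (l : seq A) i :
  i < size l -> l = take i l ++ nth a0 l i :: drop i.+1 l.
Proof. by move=> h; rewrite -(drop_nth a0 h) cat_take_drop. Qed.

Lemma rotm_tequiv d u p : tequiv u (rotm d u p).
Proof.
elim: p d u => [|i p IH] d [X cs|ps] /=; try exact: tequiv_refl.
  case e: (nth None (map Some cs) i) => [c|]; last exact: tequiv_refl.
  have [lt ec] := nth_Some (PNode set0 [::]) e.
  apply: (@teP _ X cs (take i cs ++ rotm d.+1 c p :: drop i.+1 cs)).
    rewrite {1}(split_nth (PNode set0 [::]) lt) ec.
    apply: List.Forall2_app; first exact: Forall2_tequiv_refl.
    by constructor; [exact: IH | exact: Forall2_tequiv_refl].
  exact/Permutation.Permutation_sym/Permutation.Permutation_middle.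
case e: (nth (set0, None) ps i) => [S [c|]]; last exact: tequiv_refl.
have lt : i < size ps by rewrite ltnNge; apply/negP => h; move: e; rewrite nth_default.
have F2 : List.Forall2 (@pequiv T) ps (take i ps ++ (S, Some (rotm d.+1 c p)) :: drop i.+1 ps).
  rewrite {1}(split_nth (set0, None) lt) e.
  apply: List.Forall2_app; first exact: Forall2_pequiv_refl.
  by constructor; [constructor; exact: IH | exact: Forall2_pequiv_refl].
by case: (revd d ps i); [apply: teQrev | apply: teQ].
Qed.

End Rotation.

Definition left_part (A : Type) (rv : bool) (l : seq A) (i : nat) : seq A :=
  if rv then rev (drop i.+1 l) else take i l.
Definition right_part (A : Type) (rv : bool) (l : seq A) (i : nat) : seq A :=
  if rv then rev (take i l) else drop i.+1 l.

Lemma rotated_split (A : Type) (rv : bool) (l : seq A) i a :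
  (if rv then rev (take i l ++ a :: drop i.+1 l) else take i l ++ a :: drop i.+1 l)
  = left_part rv l i ++ a :: right_part rv l i.
Proof. by rewrite /left_part /right_part; case: rv; rewrite // rev_cat rev_cons cat_rcons. Qed.

Section Parts.
Variable T : finType.

Lemma free_of_left_part (A : Type) (a0 : A) (f : A -> seq {set T}) (v : T) rv l i :
  (forall j, j < size l -> (if rv then i < j else j < i) -> free_of v (f (nth a0 l j))) ->
  free_of v (flatten (map f (left_part rv l i))).
Proof.
move=> H; apply: (free_of_flatten (a0 := a0)) => j; rewrite /left_part; case: rv H => H.
  rewrite size_rev size_drop => lt; rewrite nth_rev ?size_drop // nth_drop.
  by apply: H; lia.
by rewrite size_take => lt; rewrite nth_take; [apply: H|]; move: lt; case: ifP; lia.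
Qed.

Lemma free_of_right_part (A : Type) (a0 : A) (f : A -> seq {set T}) (v : T) rv l i :
  (forall j, j < size l -> (if rv then j < i else i < j) -> free_of v (f (nth a0 l j))) ->
  free_of v (flatten (map f (right_part rv l i))).
Proof.
move=> H; apply: (free_of_flatten (a0 := a0)) => j; rewrite /right_part; case: rv H => H.
  rewrite size_rev size_take => lt; rewrite nth_rev ?size_take // nth_take.
  - by apply: H; move: lt; case: ifP; lia.
  - by move: lt; case: ifP; lia.
by rewrite size_drop => lt; rewrite nth_drop; apply: H; lia.
Qed.

Lemma free_of_other_parts (A : Type) (a0 : A) (f : A -> seq {set T}) (v : T) rv l i :
  (forall j, j < size l -> j != i -> free_of v (f (nth a0 l j))) ->
  free_of v (flatten (map f (left_part rv l i))) /\
  free_of v (flatten (map f (right_part rv l i))).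
Proof.
move=> H; split; [apply: free_of_left_part | apply: free_of_right_part] => j lt side;
  by apply: H => //; rewrite neq_ltn; case: rv side => ->; rewrite ?orbT.
Qed.

End Parts.

Section PathRotation.
Variable T : finType.
Notation pos := ({set T} * option (mpq T))%type.
Notation p0 := ((set0, None) : pos).
Variable t : mpq T.
Variables (x y : T) (ax ay : seq nat).
Hypothesis x_node_uniq : forall b, node_of t x b -> b = ax.
Hypothesis y_node_uniq : forall b, node_of t y b -> b = ay.
Hypothesis y_node : node_of t y ay.
Hypothesis ax_prefix : ax = take (size ax) ay.
Hypothesis no_central : ~ through_central t ax ay.
Hypothesis y_leaf : ends_in_P_leaf t ay.
Hypothesis start_ok : starts_in_P t ax \/ starts_noncentral t x ax ay.

Local Notation n0 := (size ax).

Lemma off_path_free v av a j c :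
  (forall b, node_of t v b -> b = av) ->
  subt t (a ++ [:: j]) = Some c -> (forall b, a ++ j :: b <> av) -> free_of v (cliques c).
Proof.
move=> v_uniq hc hne K Kin; apply/negP => vK.
have [b hb] := clique_node Kin vK.
by apply: (hne b); apply: v_uniq; rewrite -cat_rcons -cats1 /node_of subt_cat hc.
Qed.

Lemma off_path_free_y d j c : d < size ay -> j != nth 0 ay d ->
  subt t (take d ay ++ [:: j]) = Some c -> free_of y (cliques c).
Proof.
move=> dlt nj hc; apply: off_path_free y_node_uniq hc _ => b e.
have := congr1 (nth 0 ^~ d) e; rewrite nth_cat size_take dlt ltnn subnn /=.
by move/eqP; rewrite (negbTE nj).
Qed.

Lemma off_path_free_x d j c : d <= n0 -> j != nth 0 ay d ->
  subt t (take d ay ++ [:: j]) = Some c -> free_of x (cliques c).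
Proof.
move=> dle nj hc; apply: off_path_free x_node_uniq hc _ => b e.
have ax_le : n0 <= size ay by rewrite {1}ax_prefix size_take_min geq_minr.
case: (ltnP d n0) => dn.
  have dlt : d < size ay by apply: leq_trans ax_le.
  have := congr1 (nth 0 ^~ d) e; rewrite nth_cat size_take dlt ltnn subnn /=.
  by rewrite ax_prefix nth_take // => /eqP; rewrite (negbTE nj).
have dsz : size (take d ay) = d by rewrite size_take_min; apply/minn_idPl; lia.
by have := congr1 size e; rewrite size_cat dsz /=; lia.
Qed.

Lemma y_not_above a : size a < size ay -> node_of t y a = false.
Proof. by move=> lt; apply: contraTF lt => /y_node_uniq ->; rewrite ltnn. Qed.

Lemma x_only_at a : size a != n0 -> node_of t x a = false.
Proof. by apply: contraNF => /x_node_uniq ->. Qed.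

Lemma notin_sections v a ps :
  subt t a = Some (QNode ps) -> node_of t v a = false -> forall j, v \notin (nth p0 ps j).1.
Proof.
move=> ha + j; rewrite /node_of ha => /negbT; apply: contra => vj.
apply/(has_nthP p0); exists j => //.
by rewrite ltnNge; apply: contraTN vj => h; rewrite nth_default ?inE.
Qed.

Lemma pos_free v a ps j :
  subt t a = Some (QNode ps) -> v \notin (nth p0 ps j).1 ->
  (forall c, subt t (a ++ [:: j]) = Some c -> free_of v (cliques c)) ->
  free_of v (pos_cliques (nth p0 ps j)).
Proof.
move=> ha; case E: (nth p0 ps j) => [S [c|]] /= vS Hc.
  by apply: free_of_map => //; apply: Hc; rewrite subt_cat ha /= E.
by move=> K; rewrite inE => /eqP ->.
Qed.

Lemma start_position ps : subt t ax = Some (QNode ps) ->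
  nth 0 ay n0 = lsec ps x \/ nth 0 ay n0 = rsec ps x.
Proof.
move=> hq; case: start_ok => [[S [cs hP]]|[ps' [hq' h]]]; first by rewrite hq in hP.
by move: hq'; rewrite hq => -[->].
Qed.

Lemma notin_PNode v a X cs :
  subt t a = Some (PNode X cs) -> node_of t v a = false -> v \notin X.
Proof. by rewrite /node_of => -> /negbT. Qed.

Lemma left_free_x d ps i :
  subt t (take d ay) = Some (QNode ps) -> d <= n0 -> nth 0 ay d = i ->
  free_of x (flatten (map (@pos_cliques T) (left_part (revd x n0 d ps i) ps i))).
Proof.
move=> hq dle ei; apply: (free_of_left_part (a0 := p0)) => j jlt side.
have ji : j != i by rewrite neq_ltn; move: side; case: ifP => _ ->; rewrite ?orbT.
apply: (pos_free hq) => [|c]; last by apply: off_path_free_x; rewrite ?ei.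
case: (ltngtP d n0) dle side => // dn _ side.
  apply: (notin_sections hq); apply: x_only_at.
  by rewrite size_take_min neq_ltn (leq_ltn_trans (geq_minl _ _) dn).
have hq0 : subt t ax = Some (QNode ps) by rewrite ax_prefix -dn.
move: side; rewrite /revd dn ltnn eqxx.
have [il | ir] := start_position hq0.
  rewrite -dn ei in il.
  by rewrite -il eqxx /= => side; apply: notin_before_lsec; rewrite -il.
rewrite -dn ei in ir.
case: eqP => [il|_] side; first by apply: notin_before_lsec; rewrite -il.
by apply: notin_after_rsec; rewrite -?ir.
Qed.

Lemma left_nil d ps i :
  subt t (take d ay) = Some (QNode ps) -> n0 < d < size ay -> nth 0 ay d = i ->
  i < size ps -> left_part (revd x n0 d ps i) ps i = [::].
Proof.
move=> hq /andP [nd dlt] ei ilt.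
rewrite /left_part /revd ltnNge (ltnW nd) /= gtn_eqF //.
have i_end : i = 0 \/ i = (size ps).-1.
  case: (posnP i) => [|i0]; [by left | right].
  apply/eqP; rewrite eqn_leq -ltnS prednK ?ilt ?(leq_ltn_trans (leq0n i)) //=.
  rewrite leqNgt; apply/negP => h; apply: no_central.
  by exists d, ps; rewrite nd dlt hq ei i0 h.
case: i_end => [->|i_last]; first by rewrite take0.
by rewrite i_last prednK ?drop_size; [case: ifP => // /negbFE/eqP ->; rewrite take0 | lia].
Qed.

Lemma layout_P d X cs i c' :
  subt t (take d ay) = Some (PNode X cs) -> d < size ay -> nth 0 ay d = i ->
  layout x y (n0 < d.+1) (cliques c') ->
  layout x y (n0 < d) (cliques (PNode X (c' :: take i cs ++ drop i.+1 cs))).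
Proof.
move=> hp dlt ei Lc.
have yX : y \notin X by apply: (notin_PNode hp); apply: y_not_above; rewrite size_take dlt.
have xX : (n0 < d.+1) || (x \notin X).
  case: (leqP n0 d) => dn; first by rewrite ltnS dn.
  apply/orP; right; apply: (notin_PNode hp); apply: x_only_at.
  by rewrite size_take dlt (ltn_eqF dn).
have y_sib j : j < size cs -> j != i ->
    free_of y (map (setU X) (cliques (nth (PNode set0 [::]) cs j))).
  move=> lt ji; apply: free_of_map yX _.
  by apply: off_path_free_y (subt_PNode_child hp lt); rewrite ?ei.
have [ypre ypost] :=
  free_of_other_parts (f := fun c => map (setU X) (cliques c)) false y_sib.
have ypost' : free_of y (flatten (map (fun c => map (setU X) (cliques c))
                                    (take i cs ++ drop i.+1 cs))).
  by rewrite map_cat flatten_cat; apply/free_of_cat.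
have nil_free (v : T) : free_of v [::] by [].
have := layout_app (nil_free x) (nil_free y) ypost' (layout_map yX xX Lc).
by apply: layout_weaken => nd; rewrite ltnW.
Qed.

Lemma layout_Q d ps i S c' :
  subt t (take d ay) = Some (QNode ps) -> d < size ay -> nth 0 ay d = i ->
  i < size ps -> (nth p0 ps i).1 = S -> layout x y (n0 < d.+1) (cliques c') ->
  let ps' := take i ps ++ (S, Some c') :: drop i.+1 ps in
  layout x y (n0 < d) (cliques (QNode (if revd x n0 d ps i then rev ps' else ps'))).
Proof.
move=> hq dlt ei ilt eS Lc ps'; rewrite /ps' rotated_split cliques_QNode map_cat flatten_cat /=.
have y_above : node_of t y (take d ay) = false by apply: y_not_above; rewrite size_take dlt.
have yS : y \notin S by rewrite -eS; exact: (notin_sections hq y_above).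
have xS : (n0 < d.+1) || (x \notin S).
  case: (leqP n0 d) => dn; first by rewrite ltnS dn.
  apply/orP; right; rewrite -eS; apply: (notin_sections hq); apply: x_only_at.
  by rewrite size_take dlt (ltn_eqF dn).
have y_pos j : j < size ps -> j != i -> free_of y (pos_cliques (nth p0 ps j)).
  move=> lt ji; apply: (pos_free hq (notin_sections hq y_above j)) => c.
  by apply: off_path_free_y; rewrite ?ei.
have [ypre ypost] :=
  free_of_other_parts (f := @pos_cliques T) (revd x n0 d ps i) y_pos.
have xpre : free_of x (flatten (map (@pos_cliques T) (left_part (revd x n0 d ps i) ps i))).
  case: (leqP d n0) => dn; first exact: left_free_x.
  by rewrite (left_nil hq) ?dn.
have := layout_app xpre ypre ypost (layout_map yS xS Lc).
by apply: layout_weaken => nd; rewrite ltnW // (left_nil hq) ?nd.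
Qed.

Lemma rotation_layout d u : subt t (take d ay) = Some u -> d <= size ay ->
  layout x y (n0 < d) (cliques (rotm x n0 d u (drop d ay))).
Proof.
move e: (drop d ay) => p; elim: p d u e => [|i p IH] d u e hu hd.
  have dd : d = size ay by have := congr1 size e; rewrite size_drop /=; lia.
  move: hu; rewrite dd take_size; case: y_leaf => S hS; rewrite hS => -[<-].
  exists [::], S, [::]; split=> //; move: y_node; by rewrite /node_of hS.
have dlt : d < size ay by rewrite ltnNge; apply/negP => h; move: e; rewrite drop_oversize.
have [ei ep] : nth 0 ay d = i /\ drop d.+1 ay = p by move: e; rewrite (drop_nth 0 dlt) => -[].
have [c hc] : exists c, subt t (take d.+1 ay) = Some c.
  case: y_leaf => S hS; move: (subt_cat t (take d.+1 ay) (drop d.+1 ay)).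
  by rewrite cat_take_drop hS; case: (subt t (take d.+1 ay)) => // c _; exists c.
have Lc := IH d.+1 c ep hc dlt.
move: hc; rewrite (take_nth 0 dlt) -cats1 subt_cat hu ei.
case: u hu => [X cs|ps] hu /=.
  by case: (nth None (map Some cs) i) => // c0 [->]; apply: layout_P.
case E: (nth p0 ps i) => [S [c0|]] // [->].
have ilt : i < size ps by rewrite ltnNge; apply/negP => h; move: E; rewrite nth_default.
by apply: (layout_Q hu dlt ei ilt); rewrite ?E.
Qed.

End PathRotation.

Theorem mainTheorem6 (n : nat) (g : rel 'I_n) (t : mpq 'I_n)
    (x y : 'I_n) (ax ay : seq nat) :
  is_interval g -> is_mpq_tree g t ->
  g x y ->
  node_of t x ax -> node_of t y ay ->
  is_over ax ay -> ax != ay ->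
  rotable t x ax ay ->
  interval_edge g x y.
Proof.
move=> g_int [_ [orders [node_uniq _]]] gxy x_node y_node over _ [[no_central y_leaf] start].
have uniq_node v a : node_of t v a -> forall b, node_of t v b -> b = a.
  by move=> ha b hb; case: (node_uniq v) => a0 [_ H]; rewrite -(H _ ha) -(H _ hb).
have ax_prefix : ax = take (size ax) ay by move: over; rewrite /is_over prefixE => /eqP ->.
set t' := rotm x (size ax) 0 t ay.
have [_ s_max s_consec] : [/\ uniq (cliques t'), forall K, (K \in cliques t') = maxclique g K
                            & consecutive (cliques t')].
  by apply/orders; exists t'; split=> //; apply: rotm_tequiv.
apply: (interval_edge_of_layout g_int s_max s_consec gxy).
have := rotation_layout (uniq_node _ _ x_node) (uniq_node _ _ y_node) y_node
  ax_prefix no_central y_leaf start (d := 0) (u := t).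
by rewrite take0 drop0; apply.
Qed.
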